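(* Let $\mathbb{X}$ be a restriction category. Then $\mathbb{X}$ admits a restriction terminal object if and only if $\mathbf{L}[\mathbb{X}]$ admits a local terminal object. Moreover, $\mathbb{X}$ admits restriction products (of every pair of objects) if and only if $\mathbf{L}[\mathbb{X}]$ admits local products (of every pair of objects).
   Context: Composition is diagrammatic. A restriction category is a category with an assignment to each $f:A\to B$ of $\bar f:A\to A$ such that $\bar ff=f$; $\bar f\bar g=\bar g\bar f$ and $\bar g\bar f=\overline{\bar gf}$ for $f:A\to B$, $g:A\to C$; $f\bar g=\overline{fg}f$ for $f:A\to B$, $g:B\to C$. $f$ is total if $\bar f=\mathrm{id}$. A restriction terminal object is an object $*$ such that each object $A$ has a unique total morphism $!_A:A\to *$ and $f!_B=\bar f!_A$ for every $f:A\to B$. A restriction product of $A$ and $B$ is an object $A\times B$ with total morphisms $\pi_A:A\times B\to A$, $\pi_B:A\times B\to B$ such that for all $f:C\to A$, $g:C\to B$ there is a unique $\langle f,g\rangle:C\to A\times B$ with $\langle f,g\rangle\pi_A=\bar gf$ and $\langle f,g\rangle\pi_B=\bar fg$. $\mathbf{L}[\mathbb{X}]$: objects $(A,a)$ with $a=\bar a:A\to A$; morphisms $f:(A,a)\to(B,b)$ are $f:A\to B$ with $\bar f=a$, $fb=f$; identity $a$; composition as in $\mathbb{X}$; it is a local category with $\mathsf{L}(A,a)=(A,\mathrm{id}_A)$ and $\eta_{(A,a)}=a$. In a local category (a category with objects $\mathsf{L}M$ and morphisms $\eta_M:M\to\mathsf{L}M$ satisfying the local category axioms), an object $M$ is total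 if $M=\mathsf{L}M$ and $\eta_M=\mathrm{id}_M$. A local terminal object is a total object which is terminal. A local product of $M$ and $N$ is a product $M\times N$ (with projections) in the category such that the product $\mathsf{L}M\times\mathsf{L}N$ exists, $\mathsf{L}M\times\mathsf{L}N=\mathsf{L}(M\times N)$, and $\eta_{M\times N}=\eta_M\times\eta_N$. *)

Set Implicit Arguments.
Unset Strict Implicit.

Record RestrictionCategory := {
  Obj : Type;
  Hom : Obj -> Obj -> Type;
  idm : forall A, Hom A A;
  comp : forall A B C, Hom A B -> Hom B C -> Hom A C;   (* comp f g = f;g *)
  rst : forall A B, Hom A B -> Hom A A;
  comp_assoc : forall A B C D (f : Hom A B) (g : Hom B C) (h : Hom C D),
      comp (comp f g) h = comp f (comp g h);
  comp_id_l : forall A B (f : Hom A B), comp (idm A) f = f;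
  comp_id_r : forall A B (f : Hom A B), comp f (idm B) = f;
  R1 : forall A B (f : Hom A B), comp (rst f) f = f;
  R2 : forall A B C (f : Hom A B) (g : Hom A C), comp (rst f) (rst g) = comp (rst g) (rst f);
  R3 : forall A B C (f : Hom A B) (g : Hom A C), comp (rst g) (rst f) = rst (comp (rst g) f);
  R4 : forall A B C (f : Hom A B) (g : Hom B C), comp f (rst g) = comp (rst (comp f g)) f
}.

Arguments Hom : clear implicits.
Arguments idm {X} A : rename.
Arguments comp {X A B C} f g : rename.
Arguments rst {X A B} f : rename.

Section RC.
Variable X : RestrictionCategory.

Definition total {A B : Obj X} (f : Hom X A B) : Prop := rst f = idm A.

Definition is_restriction_terminal (T : Obj X) : Prop :=
  exists bang : forall A : Obj X, Hom X A T,
    (forall A, total (bang A)) /\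
    (forall A (h : Hom X A T), total h -> h = bang A) /\
    (forall A B (f : Hom X A B), comp f (bang B) = comp (rst f) (bang A)).

Definition is_restriction_product (A B P : Obj X)
    (pA : Hom X P A) (pB : Hom X P B) : Prop :=
  total pA /\ total pB /\
  forall (C : Obj X) (f : Hom X C A) (g : Hom X C B),
    exists h : Hom X C P,
      comp h pA = comp (rst g) f /\ comp h pB = comp (rst f) g /\
      forall h' : Hom X C P,
        comp h' pA = comp (rst g) f -> comp h' pB = comp (rst f) g -> h' = h.

Lemma rst_comp_rst {A B C} (f : Hom X A B) (g : Hom X B C) :
  comp (rst (comp f g)) (rst f) = rst (comp f g).
Proof.
  rewrite R2, R3, <- comp_assoc, R1. reflexivity.
Qed.

Lemma rst_idm (A : Obj X) : rst (idm A) = idm A.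
Proof.
  rewrite <- (comp_id_r (rst (idm A))). apply R1.
Qed.

Record LObj := {
  lcar : Obj X;
  lidem : Hom X lcar lcar;
  lidem_rst : rst lidem = lidem
}.

Record LHom (M N : LObj) := {
  lmor : Hom X (lcar M) (lcar N);
  lmor_rst : rst lmor = lidem M;
  lmor_post : comp lmor (lidem N) = lmor
}.

Lemma LId_post (M : LObj) : comp (lidem M) (lidem M) = lidem M.
Proof.
  pose proof (R1 (lidem M)) as H. rewrite (lidem_rst M) in H. exact H.
Qed.

Definition LId (M : LObj) : LHom M M :=
  {| lmor := lidem M; lmor_rst := lidem_rst M; lmor_post := LId_post M |}.

Lemma LComp_rst {M N P : LObj} (f : LHom M N) (g : LHom N P) :
  rst (comp (lmor f) (lmor g)) = lidem M.
Proof.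
  pose proof (R4 (lmor f) (lmor g)) as H.
  rewrite (lmor_rst g), (lmor_post f) in H.
  rewrite <- (lmor_rst f).
  transitivity (rst (comp (rst (comp (lmor f) (lmor g))) (lmor f))).
  - rewrite <- R3, rst_comp_rst. reflexivity.
  - rewrite <- H. reflexivity.
Qed.

Lemma LComp_post {M N P : LObj} (f : LHom M N) (g : LHom N P) :
  comp (comp (lmor f) (lmor g)) (lidem P) = comp (lmor f) (lmor g).
Proof. rewrite comp_assoc, (lmor_post g). reflexivity. Qed.

Definition LComp {M N P : LObj} (f : LHom M N) (g : LHom N P) : LHom M P :=
  {| lmor := comp (lmor f) (lmor g); lmor_rst := LComp_rst f g;
     lmor_post := LComp_post f g |}.

Definition LL (M : LObj) : LObj :=
  {| lcar := lcar M; lidem := idm (lcar M); lidem_rst := rst_idm (lcar M) |}.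

Lemma Leta_post (M : LObj) : comp (lidem M) (idm (lcar M)) = lidem M.
Proof. apply comp_id_r. Qed.

Definition Leta (M : LObj) : LHom M (LL M) :=
  @Build_LHom M (LL M) (lidem M) (lidem_rst M) (Leta_post M).

End RC.

(** * Data of a local category (the operations used by the definitions of
    total objects, local terminal objects and local products) *)
Record LocalData := {
  LOb : Type;
  LHm : LOb -> LOb -> Type;
  lid : forall M, LHm M M;
  lcomp : forall M N P, LHm M N -> LHm N P -> LHm M P;  (* diagrammatic *)
  Lo : LOb -> LOb;
  eta : forall M, LHm M (Lo M)
}.
Arguments LHm : clear implicits.
Arguments lid {C} M : rename.
Arguments lcomp {C M N P} f g : rename.
Arguments Lo {C} M : rename.
Arguments eta {C} M : rename.

Section Local.
Variable C : LocalData.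

Definition is_terminal (T : LOb C) : Prop :=
  forall M : LOb C, exists t : LHm C M T, forall t' : LHm C M T, t' = t.

Definition is_product (M N P : LOb C) (p1 : LHm C P M) (p2 : LHm C P N) : Prop :=
  forall (Z : LOb C) (f : LHm C Z M) (g : LHm C Z N),
    exists h : LHm C Z P,
      lcomp h p1 = f /\ lcomp h p2 = g /\
      forall h' : LHm C Z P, lcomp h' p1 = f -> lcomp h' p2 = g -> h' = h.

Definition total_obj (M : LOb C) : Prop :=
  exists e : Lo M = M, eq_rect (Lo M) (fun Y => LHm C M Y) (eta M) M e = lid M.

Definition is_local_terminal (T : LOb C) : Prop :=
  total_obj T /\ is_terminal T.

(** P with projections p1,p2 is a local product of M and N: it is a product,
    L P carries a product LM x LN (with projections q1,q2), and
    eta_P = eta_M x eta_N, i.e. eta_P;q1 = p1;eta_M and eta_P;q2 = p2;eta_N. *)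
Definition is_local_product (M N P : LOb C) (p1 : LHm C P M) (p2 : LHm C P N) : Prop :=
  is_product p1 p2 /\
  exists (q1 : LHm C (Lo P) (Lo M)) (q2 : LHm C (Lo P) (Lo N)),
    is_product q1 q2 /\
    lcomp (eta P) q1 = lcomp p1 (eta M) /\
    lcomp (eta P) q2 = lcomp p2 (eta N).

End Local.

Definition LX (X : RestrictionCategory) : LocalData :=
  {| LOb := LObj X; LHm := @LHom X; lid := @LId X; lcomp := @LComp X;
     Lo := @LL X; eta := @Leta X |}.

From Stdlib Require Import ProofIrrelevance ClassicalEpsilon.

(* An object (A, a) of L[X] is total exactly when a = 1, so the total objects
   of L[X] are the objects of X and the maps between them are the total maps.
   If T is restriction terminal, a map (A, a) -> (T, 1) is forced to be a;!,
   since every f : A -> T equals rst f;!.  Conversely the naturality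
   f;! = rst f;! is the uniqueness of maps (A, rst f) -> (T, 1).
   A restriction product P of A and B gives the product
   (P, rst(pA;a) rst(pB;b)) of (A, a) and (B, b), whose image under L is the
   product (P, 1) of (A, 1) and (B, 1); conversely, the pairing of
   f : C -> A and g : C -> B is the product pairing tested at (C, rst f rst g). *)

Lemma terminal_hom_unique {C : LocalData} {T : LOb C} (HT : is_terminal T)
  {M : LOb C} (f g : LHm C M T) : f = g.
Proof. destruct (HT M) as [t Ht]. rewrite (Ht f), (Ht g). reflexivity. Qed.

Section RestrictionToLocal.
Context {X : RestrictionCategory}.

Lemma rst_rst {A B : Obj X} (f : Hom X A B) : rst (rst f) = rst f.
Proof.
  pose proof (R3 (idm A) f) as H. rewrite rst_idm, !comp_id_r in H.
  symmetry; exact H.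
Qed.

Lemma rst_comp_self {A B : Obj X} (f : Hom X A B) : comp (rst f) (rst f) = rst f.
Proof. pose proof (R1 (rst f)) as H. rewrite rst_rst in H. exact H. Qed.

Lemma rst_comp_total {A B C : Obj X} (f : Hom X A B) (g : Hom X B C) :
  total g -> rst (comp f g) = rst f.
Proof.
  intro Hg.
  assert (E : comp (rst (comp f g)) f = f) by (rewrite <- R4, Hg; apply comp_id_r).
  rewrite <- (rst_comp_rst f g), R3, E. reflexivity.
Qed.

Lemma rst_comp_idem_r {A B : Obj X} (f : Hom X A B) {a : Hom X B B} :
  rst a = a -> comp (rst (comp f a)) f = comp f a.
Proof. intro Ha. rewrite <- R4, Ha. reflexivity. Qed.

Lemma comp_rst_comp_r {C A B : Obj X} {h : Hom X C A} {f : Hom X A B} {a : Hom X B B} :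
  comp (comp h f) a = comp h f -> comp h (rst (comp f a)) = comp h (rst f).
Proof. intro H. rewrite !R4, <- comp_assoc, H. reflexivity. Qed.

Lemma LHom_eq {M N : LObj X} (f g : LHom M N) : lmor f = lmor g -> f = g.
Proof.
  destruct f as [f rf pf], g as [g rg pg]; simpl; intro E; subst g.
  f_equal; apply proof_irrelevance.
Qed.

Definition Ltot (A : Obj X) : LObj X := Build_LObj (rst_idm A).

Definition Lrst {A B : Obj X} (f : Hom X A B) : LObj X := Build_LObj (rst_rst f).

Definition LHom_into_total (M : LObj X) {B : Obj X} {f : Hom X (lcar M) B}
  (rf : rst f = lidem M) : LHom M (Ltot B) :=
  Build_LHom (N := Ltot B) rf (comp_id_r f).

Lemma total_obj_Ltot (A : Obj X) : @total_obj (LX X) (Ltot A).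
Proof. exists eq_refl. apply LHom_eq. reflexivity. Qed.

Lemma total_obj_eq_Ltot (M : LObj X) : @total_obj (LX X) M -> M = Ltot (lcar M).
Proof.
  intros [e _]. change (LL M = M) in e.
  assert (Hid : lidem (LL M) = idm (lcar (LL M))) by reflexivity.
  rewrite e in Hid.
  destruct M as [A a ha]; simpl in Hid; subst a.
  unfold Ltot; f_equal; apply proof_irrelevance.
Qed.

Lemma restriction_terminal_Ltot (T : Obj X) :
  is_restriction_terminal T -> @is_terminal (LX X) (Ltot T).
Proof.
  intros [bang [bang_total [bang_unique bang_natural]]].
  assert (factor : forall A (f : Hom X A T), f = comp (rst f) (bang A)).
  { intros A f.
    rewrite <- bang_natural, <- (bang_unique T (idm T) (rst_idm T)).
    symmetry; apply comp_id_r. }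
  intro M.
  assert (rt : rst (comp (lidem M) (bang (lcar M))) = lidem M)
    by (rewrite rst_comp_total by apply bang_total; apply lidem_rst).
  exists (LHom_into_total M rt). intro t. apply LHom_eq. simpl.
  rewrite (factor _ (lmor t)). f_equal. exact (lmor_rst t).
Qed.

Lemma Ltot_terminal_restriction_terminal (T : Obj X) :
  @is_terminal (LX X) (Ltot T) -> is_restriction_terminal T.
Proof.
  intro HT.
  pose (t A := proj1_sig (constructive_indefinite_description _ (HT (Ltot A)))).
  pose (bang := (fun A => lmor (t A)) : forall A, Hom X A T).
  assert (bang_total : forall A, total (bang A)) by (intro A; exact (lmor_rst (t A))).
  exists bang. split; [exact bang_total | split].
  - intros A h Hh.
    exact (f_equal (@lmor _ _ _) (terminal_hom_unique HT (LHom_into_total (Ltot A) Hh) _)).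
  - intros A B f.
    assert (r1 : rst (comp f (bang B)) = lidem (Lrst f))
      by (apply rst_comp_total, bang_total).
    assert (r2 : rst (comp (rst f) (bang A)) = lidem (Lrst f))
      by (rewrite rst_comp_total by apply bang_total; apply rst_rst).
    exact (f_equal (@lmor _ _ _)
             (terminal_hom_unique HT (LHom_into_total (Lrst f) r1)
                                       (LHom_into_total (Lrst f) r2))).
Qed.

Section LProduct.
Context {M N : LObj X} {P : Obj X} {pA : Hom X P (lcar M)} {pB : Hom X P (lcar N)}.
Hypothesis HP : is_restriction_product pA pB.
(* The idempotent is a parameter, not a definition, so that the construction
   also covers L of the product: for (A, 1) and (B, 1) it is 1 only up to
   the totality of the projections. *)
Context {p : Hom X P P} (hp : rst p = p).
Hypothesis Hp : p = comp (rst (comp pA (lidem M))) (rst (comp pB (lidem N))).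

Lemma Lprod_idem_absorb1 : comp p (rst (comp pA (lidem M))) = p.
Proof.
  rewrite Hp, comp_assoc, (R2 (comp pB (lidem N)) (comp pA (lidem M))),
    <- comp_assoc, rst_comp_self.
  reflexivity.
Qed.

Lemma Lprod_idem_absorb2 : comp p (rst (comp pB (lidem N))) = p.
Proof. rewrite Hp, comp_assoc, rst_comp_self. reflexivity. Qed.

Lemma Lproj1_rst : rst (comp p pA) = p.
Proof. rewrite rst_comp_total; [exact hp | exact (proj1 HP)]. Qed.

Lemma Lproj2_rst : rst (comp p pB) = p.
Proof. rewrite rst_comp_total; [exact hp | exact (proj1 (proj2 HP))]. Qed.

Lemma Lproj1_post : comp (comp p pA) (lidem M) = comp p pA.
Proof.
  rewrite comp_assoc, <- (rst_comp_idem_r pA (lidem_rst M)), <- comp_assoc,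
    Lprod_idem_absorb1.
  reflexivity.
Qed.

Lemma Lproj2_post : comp (comp p pB) (lidem N) = comp p pB.
Proof.
  rewrite comp_assoc, <- (rst_comp_idem_r pB (lidem_rst N)), <- comp_assoc,
    Lprod_idem_absorb2.
  reflexivity.
Qed.

Definition Lprod : LObj X := Build_LObj hp.
Definition Lproj1 : LHom Lprod M := Build_LHom (M := Lprod) Lproj1_rst Lproj1_post.
Definition Lproj2 : LHom Lprod N := Build_LHom (M := Lprod) Lproj2_rst Lproj2_post.

Lemma Lprod_idem_fixes_pairing {C : Obj X} (h : Hom X C P) :
  comp (comp h pA) (lidem M) = comp h pA ->
  comp (comp h pB) (lidem N) = comp h pB ->
  comp h p = h.
Proof.
  intros Ha Hb. destruct HP as [tA [tB _]].
  rewrite Hp, <- comp_assoc, (comp_rst_comp_r Ha), tA, comp_id_r,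
    (comp_rst_comp_r Hb), tB, comp_id_r.
  reflexivity.
Qed.

Lemma Lproj_is_product : @is_product (LX X) M N Lprod Lproj1 Lproj2.
Proof.
  destruct HP as [tA [tB pairing]].
  intros Z f g.
  pose proof (lmor_rst f) as rf. pose proof (lmor_rst g) as rg.
  destruct (pairing (lcar Z) (lmor f) (lmor g)) as [h [h1 [h2 h_unique]]].
  assert (Ef : comp (rst (lmor g)) (lmor f) = lmor f) by (rewrite rg, <- rf; apply R1).
  assert (Eg : comp (rst (lmor f)) (lmor g) = lmor g) by (rewrite rf, <- rg; apply R1).
  rewrite Ef in h1, h_unique. rewrite Eg in h2, h_unique.
  assert (rh : rst h = lidem Z) by (rewrite <- (rst_comp_total h pA tA), h1; exact rf).
  assert (hp0 : comp h p = h).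
  { apply Lprod_idem_fixes_pairing.
    - rewrite h1. exact (lmor_post f).
    - rewrite h2. exact (lmor_post g). }
  exists (Build_LHom (N := Lprod) rh hp0).
  split; [|split].
  - apply LHom_eq. simpl. rewrite <- comp_assoc, hp0. exact h1.
  - apply LHom_eq. simpl. rewrite <- comp_assoc, hp0. exact h2.
  - intros h' e1 e2. apply LHom_eq. simpl.
    apply (f_equal (@lmor _ _ _)) in e1, e2. simpl in e1, e2.
    pose proof (lmor_post h') as post. simpl in post.
    rewrite <- comp_assoc, post in e1, e2.
    exact (h_unique _ e1 e2).
Qed.

End LProduct.

Lemma restriction_product_local_product {M N : LObj X} {P : Obj X}
  {pA : Hom X P (lcar M)} {pB : Hom X P (lcar N)} :
  is_restriction_product pA pB ->
  exists (Q : LObj X) (p1 : LHom Q M) (p2 : LHom Q N), @is_local_product (LX X) M N Q p1 p2.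
Proof.
  intro HP.
  set (e := comp (rst (comp pA (lidem M))) (rst (comp pB (lidem N)))).
  assert (he : rst e = e) by (unfold e; rewrite <- R3, rst_rst; reflexivity).
  assert (hid : idm P = comp (rst (comp pA (lidem (LL M)))) (rst (comp pB (lidem (LL N))))).
  { destruct HP as [tA [tB _]]. simpl. rewrite !comp_id_r, tA, tB, comp_id_r. reflexivity. }
  exists (Lprod he), (Lproj1 HP he eq_refl), (Lproj2 HP he eq_refl).
  split; [exact (Lproj_is_product HP he eq_refl) |].
  exists (Lproj1 (M := LL M) (N := LL N) HP (rst_idm P) hid),
    (Lproj2 (M := LL M) (N := LL N) HP (rst_idm P) hid).
  split; [exact (Lproj_is_product (M := LL M) (N := LL N) HP (rst_idm P) hid) |].
  split; apply LHom_eq; simpl; rewrite comp_id_l; symmetry.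
  - exact (Lproj1_post (eq_refl e)).
  - exact (Lproj2_post (eq_refl e)).
Qed.

Lemma Ltot_product_restriction_product {A B P : Obj X}
  {q1 : LHom (Ltot P) (Ltot A)} {q2 : LHom (Ltot P) (Ltot B)} :
  @is_product (LX X) (Ltot A) (Ltot B) (Ltot P) q1 q2 ->
  is_restriction_product (lmor q1) (lmor q2).
Proof.
  intro Hq.
  assert (t1 : total (lmor q1)) by exact (lmor_rst q1).
  assert (t2 : total (lmor q2)) by exact (lmor_rst q2).
  split; [exact t1 | split; [exact t2 |]].
  intros C f g.
  set (Z := Lrst (comp (rst f) g)).
  assert (rf : rst (comp (rst g) f) = lidem Z) by (simpl; rewrite <- !R3; apply R2).
  assert (rg : rst (comp (rst f) g) = lidem Z) by reflexivity.
  destruct (Hq Z (LHom_into_total Z rf) (LHom_into_total Z rg)) as [h [h1 [h2 h_unique]]].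
  exists (lmor h).
  apply (f_equal (@lmor _ _ _)) in h1, h2. simpl in h1, h2.
  split; [exact h1 | split; [exact h2 |]].
  intros h' e1 e2.
  assert (rh : rst h' = lidem Z) by (rewrite <- (rst_comp_total h' _ t1), e1; exact rf).
  assert (E : LHom_into_total Z (B := P) rh = h).
  { apply h_unique; apply LHom_eq; assumption. }
  exact (f_equal (@lmor _ _ _) E).
Qed.

End RestrictionToLocal.

Theorem proposition6p8 (X : RestrictionCategory) :
  ((exists T : Obj X, is_restriction_terminal T) <->
   (exists M : LOb (LX X), is_local_terminal M))
  /\
  ((forall A B : Obj X, exists (P : Obj X) (pA : Hom X P A) (pB : Hom X P B),
        is_restriction_product pA pB) <->
   (forall M N : LOb (LX X), exists (P : LOb (LX X)) (p1 : LHm _ P M) (p2 : LHm _ P N),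
        is_local_product p1 p2)).
Proof.
  split; split.
  - intros [T HT]. exists (Ltot T).
    split; [apply total_obj_Ltot | exact (restriction_terminal_Ltot T HT)].
  - intros [M [HM HT]]. exists (lcar M).
    apply Ltot_terminal_restriction_terminal.
    rewrite <- (total_obj_eq_Ltot M HM). exact HT.
  - intros HP M N.
    destruct (HP (lcar M) (lcar N)) as [P [pA [pB HPr]]].
    exact (restriction_product_local_product HPr).
  - intros HL A B.
    destruct (HL (Ltot A) (Ltot B)) as [P [_ [_ [_ [q1 [q2 [Hq _]]]]]]].
    exists (lcar P), (lmor q1), (lmor q2).
    exact (Ltot_product_restriction_product Hq).
Qed.
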